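(* Every acyclic unique sink orientation of the $n$-dimensional cube with $n \geq 4$ is $(n-2)$-nice.
   Context: Let $Q^n = 2^{[n]}$ be the vertex set of the $n$-cube, with $u,v$ adjacent iff $|u\oplus v|=1$; faces are $F_{J,v}=\{u : v\oplus u\subseteq J\}$ for $J\subseteq[n]$. A unique sink orientation (USO) is an orientation of the cube's edges such that every nonempty face has a unique sink (vertex with no outgoing edges within the face); it is acyclic (an AUSO) if it has no directed cycle. The outmap $s_\psi(v)$ is the set of coordinates $j$ such that the edge $\{v,v\oplus\{j\}\}$ is directed away from $v$; the global sink is the vertex $t$ with $s_\psi(t)=\emptyset$. Let $d(v,u)$ be the length of a shortest directed path from $v$ to $u$ ($\infty$ if none). The reachmap is $r_\psi(v)=s_\psi(v)\cup\{j : \exists u \text{ reachable from } v \text{ by a directed path with } j\in s_\psi(u)\}$. A vertex $v$ is $i$-covered by $u$ if $d(v,u)\le i$ and $r_\psi(u)\subsetneq r_\psi(v)$; $\psi$ is $i$-nice if every vertex other than the global sink is $i$-covered by some vertex. *)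

From mathcomp Require Import all_boot.
Set Implicit Arguments. Unset Strict Implicit. Unset Printing Implicit Defensive.

Definition vtx (n : nat) := {set 'I_n}.

Definition symd (n : nat) (u v : {set 'I_n}) : {set 'I_n} := (u :\: v) :|: (v :\: u).

Definition adjacent (n : nat) (u v : {set 'I_n}) : bool := #|symd u v| == 1.

Definition is_orientation (n : nat) (arc : rel {set 'I_n}) : Prop :=
  (forall u v, arc u v -> adjacent u v) /\
  (forall u v, adjacent u v -> arc u v (+) arc v u).

Definition face (n : nat) (J v : {set 'I_n}) : {set {set 'I_n}} :=
  [set u | symd v u \subset J].

Definition is_face_sink (n : nat) (arc : rel {set 'I_n}) (F : {set {set 'I_n}})
  (u : {set 'I_n}) : bool :=
  (u \in F) && [forall w, (w \in F) ==> adjacent u w ==> ~~ arc u w].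

Definition is_USO (n : nat) (arc : rel {set 'I_n}) : Prop :=
  is_orientation arc /\
  forall J v : {set 'I_n}, face J v != set0 ->
    exists! u, is_face_sink arc (face J v) u.

Definition acyclic (n : nat) (arc : rel {set 'I_n}) : Prop :=
  forall u v, arc u v -> ~~ connect arc v u.

Definition is_AUSO (n : nat) (arc : rel {set 'I_n}) : Prop :=
  is_USO arc /\ acyclic arc.

Definition outmap (n : nat) (arc : rel {set 'I_n}) (v : {set 'I_n}) : {set 'I_n} :=
  [set j | arc v (symd v [set j])].

Definition dist_le (n : nat) (arc : rel {set 'I_n}) (i : nat) (v u : {set 'I_n}) : Prop :=
  exists p : seq {set 'I_n}, [/\ size p <= i, path arc v p & last v p = u].

Definition reachmap (n : nat) (arc : rel {set 'I_n}) (v : {set 'I_n}) : {set 'I_n} :=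
  outmap arc v :|: \bigcup_(u | connect arc v u) outmap arc u.

Definition i_covered (n : nat) (arc : rel {set 'I_n}) (i : nat) (v u : {set 'I_n}) : Prop :=
  dist_le arc i v u /\ reachmap arc u \proper reachmap arc v.

Definition global_sink (n : nat) (arc : rel {set 'I_n}) (t : {set 'I_n}) : Prop :=
  outmap arc t = set0.

Definition i_nice (n : nat) (arc : rel {set 'I_n}) (i : nat) : Prop :=
  forall v, ~ global_sink arc v -> exists u, i_covered arc i v u.

From mathcomp Require Import all_boot zify.
Set Implicit Arguments. Unset Strict Implicit. Unset Printing Implicit Defensive.

(* Let t be the global sink and v any other vertex.  If v is within Hamming
   distance n-2 of t, then t, the sink of the face spanned by v and t, is
   reached along a shortest path and covers v, since r(t) is empty.
   Otherwise t is within distance 1 of the antipode c of v.  Among the vertices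
   at distance at least 2 from c choose z with the fewest descendants; by
   acyclicity all proper descendants of z lie within distance 1 of c.  So z
   leaves only in directions of z (+) c, which forces |z (+) c| = 2 and makes z
   the sink of the face spanned by v and z, at distance n-2 from v.  The
   descendants of z are z, vertices next to c, c itself and possibly t, hence
   r(z) lies in (z (+) c) u (t (+) c), a set of at most 3 directions, whereas
   r(v) contains v (+) t, which together with t (+) c is all of [n]. *)

Section SymmetricDifference.
Variable n : nat.
Implicit Types (u v w A : {set 'I_n}) (j : 'I_n).

Lemma in_symd u v j : (j \in symd u v) = (j \in u) (+) (j \in v).
Proof. by rewrite /symd !inE; case: (j \in u); case: (j \in v). Qed.

Lemma symdC u v : symd u v = symd v u.
Proof. by apply/setP => j; rewrite !in_symd addbC. Qed.

Lemma symdA u v w : symd u (symd v w) = symd (symd u v) w.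
Proof. by apply/setP => j; rewrite !in_symd addbA. Qed.

Lemma symdAC u v w : symd (symd u v) w = symd (symd u w) v.
Proof. by apply/setP => j; rewrite !in_symd addbAC. Qed.

Lemma symdvv u : symd u u = set0.
Proof. by apply/setP => j; rewrite in_symd addbb inE. Qed.

Lemma symd0l u : symd set0 u = u.
Proof. by apply/setP => j; rewrite in_symd inE. Qed.

Lemma symdKl u w : symd u (symd u w) = w.
Proof. by rewrite symdA symdvv symd0l. Qed.

Lemma symdKr u w : symd (symd u w) w = u.
Proof. by rewrite -symdA symdvv symdC symd0l. Qed.

Lemma symdCr u w : symd u (~: w) = ~: symd u w.
Proof. by apply/setP => j; rewrite !(in_symd, in_setC); case: (j \in u). Qed.

Lemma symd_eq0 u w : (symd u w == set0) = (u == w).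
Proof.
apply/eqP/eqP => [h|->]; last exact: symdvv.
by rewrite -(symdKl u w) h symdC symd0l.
Qed.

Lemma symd_subU u v w : symd u w \subset symd u v :|: symd v w.
Proof.
apply/subsetP => j; rewrite !(inE, in_symd).
by case: (j \in u); case: (j \in v); case: (j \in w).
Qed.

Lemma symdU_setC u v : symd u v :|: symd v (~: u) = setT.
Proof.
apply/setP => j; rewrite !(inE, in_symd).
by case: (j \in u); case: (j \in v).
Qed.

Lemma symdD1 A j : j \in A -> symd A [set j] = A :\ j.
Proof.
move=> jA; apply/setP => i; rewrite in_symd !inE.
by case: (i =P j) => [->|]; rewrite ?jA ?addbT ?addbF.
Qed.

Lemma symdU1 A j : j \notin A -> symd A [set j] = j |: A.
Proof.
move=> /negbTE jA; apply/setP => i; rewrite in_symd !inE.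
by case: (i =P j) => [->|]; rewrite ?jA ?addbT ?addbF.
Qed.

Lemma card_symd1 A j :
  #|symd A [set j]| = if j \in A then (#|A|).-1 else (#|A|).+1.
Proof.
case: ifPn => jA; first by rewrite symdD1 // (cardsD1 j A) jA.
by rewrite symdU1 // cardsU1 jA.
Qed.

Lemma cardsC_ord A : #|~: A| = n - #|A|.
Proof. by have := cardsC A; rewrite card_ord; lia. Qed.

Lemma adjacentP u w : adjacent u w -> exists j, w = symd u [set j].
Proof. by move=> /cards1P [j hj]; exists j; rewrite -hj symdKl. Qed.

Lemma adjacent_symd1 u j : adjacent u (symd u [set j]).
Proof. by rewrite /adjacent symdKl cards1. Qed.

End SymmetricDifference.

Section Paths.
Variables (n : nat) (arc : rel {set 'I_n}).

Lemma dist_le_cons i v w u : arc v w -> dist_le arc i w u -> dist_le arc i.+1 v u.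
Proof. by move=> a [p [hs hp hl]]; exists (w :: p); rewrite /= a. Qed.

Lemma dist_le_mono i k v u : i <= k -> dist_le arc i v u -> dist_le arc k v u.
Proof. by move=> ik [p [hs hp hl]]; exists p; split=> //; apply: leq_trans ik. Qed.

Lemma dist_le_connect i v u : dist_le arc i v u -> connect arc v u.
Proof. by move=> [p [_ hp hl]]; apply/connectP; exists p. Qed.

Lemma reachP v j :
  reflect (exists2 y, connect arc v y & j \in outmap arc y) (j \in reachmap arc v).
Proof.
rewrite /reachmap inE; apply: (iffP orP) => [[h|/bigcupP [y]]|[y hy hj]].
- by exists v.
- by exists y.
- by right; apply/bigcupP; exists y.
Qed.

Lemma reachmap_connect v u : connect arc v u -> reachmap arc u \subset reachmap arc v.
Proof.
move=> cvu; apply/subsetP => j /reachP [w cuw hj]; apply/reachP.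
by exists w => //; apply: connect_trans cvu cuw.
Qed.

End Paths.

Lemma acyclic_minimal (T : finType) (e : rel T) (P : pred T) x :
  (forall x y, e x y -> ~~ connect e y x) -> P x ->
  exists2 z, P z & forall y, connect e z y -> P y -> y = z.
Proof.
move=> acyc Px; pose reach y := [set w | connect e y w].
have [z Pz zmin] := arg_minnP (fun y => #|reach y|) Px.
exists z => // y czy Py.
have sub : reach y \subset reach z.
  by apply/subsetP => w; rewrite !inE; apply: connect_trans.
have : reach y == reach z by rewrite eqEcard sub zmin.
move=> /eqP /setP /(_ z); rewrite !inE connect0 => cyz.
case/connectP: czy cyz => [[|w p] /= hp -> //] cyz.
case/andP: hp => ezw hp.
have cwy : connect e w (last w p) by apply/connectP; exists p.
by have := acyc _ _ ezw; rewrite (connect_trans cwy cyz).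
Qed.

Section Orientation.
Variables (n : nat) (arc : rel {set 'I_n}).
Hypothesis Ho : is_orientation arc.

Lemma arc_outmap u w : arc u w -> exists2 j, w = symd u [set j] & j \in outmap arc u.
Proof.
move=> a; have [j hj] := adjacentP (Ho.1 _ _ a).
by exists j => //; rewrite inE -hj.
Qed.

Lemma arc_asym u w : arc u w -> ~~ arc w u.
Proof. by move=> a; have := Ho.2 _ _ (Ho.1 _ _ a); rewrite a. Qed.

Lemma global_sink_connect t u : global_sink arc t -> connect arc t u -> u = t.
Proof.
move=> ht /connectP [[|w p] //= /andP [a _] ->].
by have [j _] := arc_outmap a; rewrite ht inE.
Qed.

Lemma reachmap_global_sink t : global_sink arc t -> reachmap arc t = set0.
Proof.
move=> ht; apply/setP => j; rewrite in_set0; apply/negbTE/negP.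
by case/reachP => y /(global_sink_connect ht) ->; rewrite ht inE.
Qed.

Lemma symd_sub_reachmap v u : connect arc v u -> symd v u \subset reachmap arc v.
Proof.
move=> /connectP [p hp ->]; elim: p v hp => [|w p IH] v /=.
  by rewrite symdvv sub0set.
case/andP=> a /IH sub; have [j hw hj] := arc_outmap a.
apply: subset_trans (symd_subU v w _) _; rewrite subUset; apply/andP; split.
  by rewrite hw symdKl sub1set; apply/reachP; exists v.
by apply: subset_trans sub (reachmap_connect (connect1 a)).
Qed.

Lemma face_setT_sink v x : is_face_sink arc (face setT v) x <-> global_sink arc x.
Proof.
split.
  case/andP => _ /forallP hx; apply/setP => j; rewrite !inE; apply/negbTE.
  by have := hx (symd x [set j]); rewrite inE subsetT adjacent_symd1.
move=> hx; rewrite /is_face_sink inE subsetT; apply/forallP => w.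
apply/implyP => _; apply/implyP => /adjacentP [j ->]; apply/negP => a.
have : j \in outmap arc x by rewrite inE.
by rewrite hx inE.
Qed.

End Orientation.

Section UniqueSinkOrientation.
Variables (n : nat) (arc : rel {set 'I_n}).
Hypothesis HU : is_USO arc.

Lemma global_sink_exists : exists t, global_sink arc t.
Proof.
have ne : face setT (set0 : {set 'I_n}) != set0.
  by apply/set0Pn; exists set0; rewrite inE subsetT.
by have [u [/face_setT_sink ht _]] := HU.2 _ _ ne; exists u.
Qed.

Lemma global_sink_uniq x y : global_sink arc x -> global_sink arc y -> x = y.
Proof.
move=> /(face_setT_sink arc set0) hx /(face_setT_sink arc set0) hy.
have ne : face setT (set0 : {set 'I_n}) != set0.
  by apply/set0Pn; exists x; rewrite inE subsetT.
have [u [_ hu]] := HU.2 _ _ ne.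
by rewrite -(hu _ hx) (hu _ hy).
Qed.

Lemma face_sink_disjoint v x :
  [disjoint outmap arc x & symd v x] -> is_face_sink arc (face (symd v x) v) x.
Proof.
move=> dis; rewrite /is_face_sink inE subxx; apply/forallP => w.
apply/implyP; rewrite inE => hw; apply/implyP => /adjacentP [j ew].
rewrite {}ew in hw *; apply/negP => a.
have jx : j \in outmap arc x by rewrite inE.
case hj: (j \in symd v x).
  by move: dis; rewrite disjoints_subset => /subsetP /(_ j jx); rewrite inE hj.
have := subsetP hw j; rewrite hj symdA in_symd hj inE eqxx.
by move/(_ isT).
Qed.

Lemma face_nonsink_out J v u : u \in face J v ->
  ~~ is_face_sink arc (face J v) u -> exists2 j, j \in J & j \in outmap arc u.
Proof.
move=> uF; rewrite /is_face_sink uF negb_forall => /existsP [w].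
rewrite !negb_imply => /and4P [wF /adjacentP [j ew] a _].
exists j; last by rewrite inE -ew.
have ju : j \in symd u w by rewrite ew symdKl set11.
move: uF wF; rewrite !inE => uF wF.
have := subsetP (symd_subU u v w) j ju; rewrite inE symdC.
by case/orP; [apply: (subsetP uF) | apply: (subsetP wF)].
Qed.

Lemma uso_dist_le v x :
  [disjoint outmap arc x & symd v x] -> dist_le arc #|symd v x| v x.
Proof.
move: {2}#|symd v x| (erefl #|symd v x|) => k; elim: k v => [|k IH] v hk dis.
  by move/eqP: hk; rewrite cards_eq0 symd_eq0 => /eqP ->; exists [::].
have vF : v \in face (symd v x) v by rewrite inE symdvv sub0set.
have : ~~ is_face_sink arc (face (symd v x) v) v.
  have ne : face (symd v x) v != set0 by apply/set0Pn; exists v.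
  apply/negP => vs; have [u [_ hu]] := HU.2 _ _ ne.
  by move: hk; rewrite -(hu _ vs) (hu _ (face_sink_disjoint dis)) symdvv cards0.
case/(face_nonsink_out vF) => j jvx ojv.
have ewx : symd (symd v [set j]) x = symd v x :\ j by rewrite symdAC symdD1.
have cw : #|symd (symd v [set j]) x| = k.
  by move: hk; rewrite ewx (cardsD1 j) jvx add1n => -[].
have dw : [disjoint outmap arc x & symd (symd v [set j]) x].
  by rewrite ewx; apply: disjointWr dis; apply: subsetDl.
rewrite hk; apply: (dist_le_cons (w := symd v [set j])); first by rewrite inE in ojv.
by rewrite -[in dist_le _ k]cw; apply: IH.
Qed.

Lemma dist_le_global_sink v t : global_sink arc t -> dist_le arc #|symd v t| v t.
Proof. by move=> ht; apply: uso_dist_le; rewrite ht; apply: eq_disjoint0 => j; rewrite inE. Qed.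

Lemma connect_global_sink v t : global_sink arc t -> connect arc v t.
Proof. by move/(dist_le_global_sink v)/dist_le_connect. Qed.

End UniqueSinkOrientation.

Lemma sink_covers n (arc : rel {set 'I_n}) (i : nat) v t :
  is_USO arc -> global_sink arc t -> ~ global_sink arc v -> #|symd v t| <= i ->
  i_covered arc i v t.
Proof.
move=> HU ht nv vt; split.
  exact: dist_le_mono vt (dist_le_global_sink HU v ht).
rewrite (reachmap_global_sink HU.1 ht) proper0; apply: contra_not_neq nv => rv.
apply/setP => j; rewrite in_set0; apply/negbTE/negP => jv.
have : j \in reachmap arc v by apply/reachP; exists v.
by rewrite rv inE.
Qed.

Section MinimalFarVertex.
Variables (n : nat) (arc : rel {set 'I_n}) (c z t : {set 'I_n}).
Hypotheses (HU : is_USO arc) (Hac : acyclic arc) (ht : global_sink arc t).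
Hypothesis z_far : 1 < #|symd z c|.
Hypothesis z_min : forall y, connect arc z y -> 1 < #|symd y c| -> y = z.

Let Ho : is_orientation arc := HU.1.

Lemma desc_near y : connect arc z y -> y != z -> #|symd y c| <= 1.
Proof.
move=> czy nyz; rewrite leqNgt; apply/negP => /(z_min czy) eyz.
by rewrite eyz eqxx in nyz.
Qed.

Lemma desc_arc_neq y w : connect arc z y -> arc y w -> w != z.
Proof. by move=> czy a; apply/eqP => ewz; move: (Hac a); rewrite ewz czy. Qed.

Lemma outmap_far_sub : outmap arc z \subset symd z c.
Proof.
apply/subsetP => j hj; apply: contraLR z_far => jz.
have a : arc z (symd z [set j]) by rewrite inE in hj.
have := desc_near (connect1 a) (desc_arc_neq (connect0 _ _) a).
by rewrite symdAC card_symd1 (negbTE jz); lia.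
Qed.

Lemma card_far_le2 : ~ global_sink arc z -> #|symd z c| <= 2.
Proof.
move=> /eqP /set0Pn [j hj].
have a : arc z (symd z [set j]) by rewrite inE in hj.
have := desc_near (connect1 a) (desc_arc_neq (connect0 _ _) a).
by rewrite symdAC card_symd1 (subsetP outmap_far_sub _ hj); lia.
Qed.

(* [y] is [c]; every other neighbour of [w] is at distance 2 from [c], so cannot be a descendant. *)
Lemma desc_next_to_center_sink y w :
  connect arc z y -> arc y w -> symd y c = set0 -> global_sink arc w.
Proof.
move=> czy a yc; have czw : connect arc z w := connect_trans czy (connect1 a).
have [j ew _] := arc_outmap Ho a; subst w.
have wc : symd (symd y [set j]) c = [set j] by rewrite symdAC yc symd0l.
apply/setP => f; rewrite in_set0; apply/negbTE/negP => hf.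
set w := symd y [set j] in hf czw wc *.
have a' : arc w (symd w [set f]) by rewrite inE in hf.
have := desc_near (connect_trans czw (connect1 a')) (desc_arc_neq czw a').
rewrite symdAC wc card_symd1 inE cards1.
case: (f =P j) => [efj|] //= _.
by rewrite /w efj symdKr in a'; move: (arc_asym Ho a); rewrite a'.
Qed.

Lemma arc_desc_symd_sub y w : connect arc z y -> arc y w ->
  symd y c \subset symd z c :|: symd t c -> symd w c \subset symd z c :|: symd t c.
Proof.
move=> czy a yB; have [j ew oj] := arc_outmap Ho a.
have ewc : symd w c = symd (symd y c) [set j] by rewrite ew symdAC.
have [eyz|nyz] := eqVneq y z.
  rewrite ewc eyz symdD1 ?(subsetP outmap_far_sub) -?eyz //.
  by apply: subset_trans (subsetDl _ _) (subsetUl _ _).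
have [jy|jy] := boolP (j \in symd y c).
  by rewrite ewc symdD1 //; apply: subset_trans (subsetDl _ _) yB.
have czw := connect_trans czy (connect1 a).
have := desc_near czw (desc_arc_neq czy a); rewrite ewc card_symd1 (negbTE jy).
rewrite ltnS leqn0 cards_eq0 => /eqP yc.
by rewrite -ewc (global_sink_uniq HU (desc_next_to_center_sink czy a yc) ht) subsetUr.
Qed.

Lemma desc_symd_sub y : connect arc z y -> symd y c \subset symd z c :|: symd t c.
Proof.
case/connectP => p; elim/last_ind: p y => [|p w IH] y /=; first by move=> _ ->; apply: subsetUl.
rewrite rcons_path last_rcons => /andP [hp a] ->.
have czl : connect arc z (last z p) by apply/connectP; exists p.
exact: arc_desc_symd_sub czl a (IH _ hp erefl).
Qed.

Lemma reachmap_far_sub : reachmap arc z \subset symd z c :|: symd t c.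
Proof.
apply/subsetP => j /reachP [y czy hj].
have a : arc y (symd y [set j]) by rewrite inE in hj.
have : j \in symd y (symd y [set j]) by rewrite symdKl set11.
move/(subsetP (symd_subU _ c _)); rewrite inE [symd c _]symdC.
by case/orP; apply/subsetP/desc_symd_sub; last apply: connect_trans czy (connect1 a).
Qed.

Lemma dist_le_far : dist_le arc (n - #|symd z c|) (~: c) z.
Proof.
have e : symd (~: c) z = ~: symd z c by rewrite symdC symdCr.
rewrite -cardsC_ord -e; apply: (uso_dist_le HU).
by rewrite e disjoints_subset setCK outmap_far_sub.
Qed.

End MinimalFarVertex.

Theorem theorem13 (n : nat) (arc : rel {set 'I_n}) :
  4 <= n -> is_AUSO arc -> i_nice arc (n - 2).
Proof.
move=> n4 [HU Hac] v nv; have [t ht] := global_sink_exists HU.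
have [near|far] := leqP #|symd v t| (n - 2); first by exists t; apply: sink_covers.
pose c := ~: v.
have tc : #|symd t c| <= 1 by rewrite symdCr cardsC_ord symdC; lia.
have vc : 1 < #|symd v c| by rewrite symdCr symdvv setC0 cardsT card_ord; lia.
have [z zc zmin] := acyclic_minimal (P := fun y => 1 < #|symd y c|) Hac vc.
have zt : ~ global_sink arc z by move=> /(global_sink_uniq HU ht) etz; move: zc; rewrite -etz; lia.
have dvz : dist_le arc (n - 2) v z.
  have := dist_le_far HU Hac zc zmin; rewrite setCK; apply: dist_le_mono; lia.
exists z; split => //.
rewrite properE (reachmap_connect (dist_le_connect dvz)) /=; apply/negP => sub.
have : [set: 'I_n] \subset symd z c :|: symd t c.
  rewrite -(symdU_setC v t) subUset subsetUr andbT.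
  apply: subset_trans (symd_sub_reachmap HU.1 (connect_global_sink HU v ht)) _.
  exact: subset_trans sub (reachmap_far_sub HU Hac ht zc zmin).
move/subset_leq_card; rewrite cardsT card_ord.
have := (leq_card_setU (symd z c) (symd t c)).1.
have := card_far_le2 Hac zc zmin zt; lia.
Qed.
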